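(* Let $\mathbb M^{3}$ be Minkowski $3$-space with form $\langle-,-\rangle$ of signature $-++$, and let $\mathcal K\subset\mathbb P^2_\mathbb R$ be the set of lines $\mathbb Rp$ with $\langle p,p\rangle<0$, with its hyperbolic metric, and $\partial\mathcal K$ the set of lines $\mathbb Rf$ with $f\ne0$, $\langle f,f\rangle=0$. Let $\pmb f=\mathbb Rf\in\partial\mathcal K$ and let $\pmb r,\pmb r'\in\mathcal K$ lie on a same horocycle containing $\pmb f$. Then $\nu_{\pmb r}=\nu_{\pmb r'}$, where for $\pmb s=\mathbb Rs\in\mathcal K$ the frequency of the photon $\pmb f$ measured by $\pmb s$ is $\nu_{\pmb s}:=\frac{|\langle f,s\rangle|}{\sqrt{-\langle s,s\rangle}}$ (for a fixed representative $f$).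
   Context: The hyperbolic metric on $\mathcal K$: identifying $T_{\pmb p}\mathbb P^2_\mathbb R=\mathrm{Lin}(\mathbb Rp,p^\perp)$, put $\langle\varphi_1,\varphi_2\rangle_{\pmb p}:=-\frac{\langle\varphi_1(p),\varphi_2(p)\rangle}{\langle p,p\rangle}$; this is Klein's model of the hyperbolic plane (curvature $-1$), with isometry group containing $\mathrm{SO}^+(1,2)$ acting projectively. A parabolic isometry is a non-identity orientation-preserving isometry with exactly one fixed point, which lies in $\partial\mathcal K$. A horocycle containing $\pmb f$ is the orbit of a point of $\mathcal K$ under a one-parameter group of parabolic isometries fixing $\pmb f$ (equivalently, a curve ending at $\pmb f$ orthogonal to every geodesic having $\pmb f$ as a vertex). The quantity $\nu_{\pmb s}$ is, up to a constant factor independent of $\pmb s$, the energy (frequency) of the photon with momentum $f$ as measured by the observer $\mathbb Rs$, i.e. $|\pi'[\pmb s]f|$ with $\pi'[\pmb s]f=\frac{\langle f,s\rangle}{\langle s,s\rangle}s$. *)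

From HB Require Import structures.
From mathcomp Require Import all_boot all_order all_algebra.
From mathcomp Require Import all_classical all_reals topology normedtype.
Set Implicit Arguments. Unset Strict Implicit. Unset Printing Implicit Defensive.
Import Order.TTheory GRing.Theory Num.Theory numFieldNormedType.Exports.
Local Open Scope ring_scope.

Definition vec (R : realType) := 'cV[R]_3.

Definition minkJ (R : realType) : 'M[R]_3 :=
  diag_mx (\row_(i < 3) (if i == 0 :> nat then -1 else 1)).

Definition mink (R : realType) (x y : vec R) : R := (x^T *m minkJ R *m y) 0 0.

(* x represents a point R x of the Klein disc K *)
Definition in_K (R : realType) (p : vec R) : Prop := mink p p < 0.
(* f represents a point R f of the boundary dK *)
Definition in_bdK (R : realType) (f : vec R) : Prop := f != 0 /\ mink f f = 0.

Definition same_line (R : realType) (p q : vec R) : Prop :=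
  exists c : R, c != 0 /\ p = c *: q.

(* orientation-preserving isometries of K: SO^+(1,2), acting projectively *)
Definition SOplus (R : realType) (A : 'M[R]_3) : Prop :=
  A^T *m minkJ R *m A = minkJ R /\ \det A = 1 /\ 0 < A 0 0.

Definition fixes_pt (R : realType) (A : 'M[R]_3) (p : vec R) : Prop :=
  exists l : R, A *m p = l *: p.

(* A is a parabolic isometry whose unique fixed point (in K u dK) is R f *)
Definition parabolic_fixing (R : realType) (A : 'M[R]_3) (f : vec R) : Prop :=
  SOplus A /\ A != 1%:M /\ fixes_pt A f /\
  forall p : vec R, p != 0 -> mink p p <= 0 -> fixes_pt A p -> same_line p f.

Definition parabolic_1pgroup (R : realType) (g : R -> 'M[R]_3) (f : vec R) : Prop :=
  g 0 = 1%:M /\ (forall s t, g (s + t) = g s *m g t) /\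
  (forall i j : 'I_3, continuous (fun t : R => g t i j)) /\
  (forall t, t != 0 -> parabolic_fixing (g t) f).

Definition on_same_horocycle (R : realType) (f r r' : vec R) : Prop :=
  exists (g : R -> 'M[R]_3) (p0 : vec R) (t t' : R),
    parabolic_1pgroup g f /\ in_K p0 /\
    same_line r (g t *m p0) /\ same_line r' (g t' *m p0).

Definition nu (R : realType) (f s : vec R) : R :=
  `|mink f s| / Num.sqrt (- mink s s).

(* A parabolic isometry A fixing the null line R f acts on f by a scalar l
   with l^2 = 1.  Indeed, since A preserves the form, the covector J f is an
   eigenvector of A^T for l^-1, so l^-1 is also an eigenvalue of A.  If
   l^2 <> 1, an eigenvector u of A for l^-1 is null (as <Au, Au> = l^-2 <u, u>),
   so R u is a fixed point of A in the closed disc; uniqueness gives R u = R f,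
   whence l^-1 = l after all.  Therefore |<f, A s>| = |<f, s>| and
   <A s, A s> = <s, s>: the frequency nu_f is invariant under A, and being
   homogeneous of degree 0 it is constant along every horocycle at R f. *)
From mathcomp Require Import all_boot all_order all_algebra.
From mathcomp Require Import all_classical all_reals topology normedtype.
From mathcomp Require Import ring.
Import Order.TTheory GRing.Theory Num.Theory numFieldNormedType.Exports.
Local Open Scope ring_scope.
Set Implicit Arguments.

Section Eigenvalues.

Variables (F : fieldType) (n : nat).
Implicit Type A : 'M[F]_n.

Lemma eigenvalue_det A a : eigenvalue A a = (\det (A - a%:M) == 0).
Proof.
apply/eigenvalueP/det0P => [[v Av v0] | [v v0 Av]]; exists v => //.
  by rewrite mulmxBr mul_mx_scalar Av subrr.
by apply/eqP; move/eqP: Av; rewrite mulmxBr mul_mx_scalar subr_eq0.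
Qed.

Lemma eigenvalue_tr A a : eigenvalue A^T a = eigenvalue A a.
Proof. by rewrite !eigenvalue_det -det_tr linearB /= trmxK tr_scalar_mx. Qed.

Lemma col_eigenvalueP A a :
  reflect (exists2 u : 'cV_n, A *m u = a *: u & u != 0) (eigenvalue A^T a).
Proof.
apply: (iffP eigenvalueP) => -[v Av v0]; exists v^T; rewrite ?trmx_eq0 //.
  by apply: trmx_inj; rewrite trmx_mul trmxK Av linearZ /= trmxK.
by rewrite -trmx_mul Av linearZ.
Qed.

Lemma unitmx_eigenvalue_neq0 A (u : 'cV_n) a :
  A \in unitmx -> u != 0 -> A *m u = a *: u -> a != 0.
Proof.
move=> Aunit u0 Au; apply: contraNneq u0 => a0.
by rewrite -(mulKmx Aunit u) Au a0 scale0r mulmx0.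
Qed.

End Eigenvalues.

Section Minkowski.

Variable R : realType.
Implicit Types (A : 'M[R]_3) (f p q u : vec R).

Definition mink_isometry A : Prop := A^T *m minkJ R *m A = minkJ R.

Lemma minkZl c p q : mink (c *: p) q = c * mink p q.
Proof. by rewrite /mink linearZ /= -!scalemxAl mxE. Qed.

Lemma minkZr c p q : mink p (c *: q) = c * mink p q.
Proof. by rewrite /mink -!scalemxAr mxE. Qed.

Lemma minkJK : minkJ R *m minkJ R = 1%:M.
Proof.
apply/matrixP => i j; rewrite /minkJ mul_diag_mx !mxE mulrnAr.
by congr (_ *+ _); case: ifP => _; rewrite ?mulN1r ?opprK ?mulr1.
Qed.

Lemma mink_mulmx A p q :
  mink_isometry A -> mink (A *m p) (A *m q) = mink p q.
Proof. by move=> AJA; rewrite /mink -[in RHS]AJA trmx_mul !mulmxA. Qed.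

Lemma nuZ c f p : c != 0 -> nu f (c *: p) = nu f p.
Proof.
move=> c0; rewrite /nu minkZr minkZl minkZr.
have -> : - (c * (c * mink p p)) = c ^+ 2 * - mink p p by ring.
rewrite sqrtrM ?sqr_ge0 // sqrtr_sqr normrM invfM mulrACA divff ?mul1r //.
by rewrite normr_eq0.
Qed.

Lemma isometry_eigenvector_null A u a :
  mink_isometry A -> A *m u = a *: u -> a ^+ 2 != 1 ->
  mink u u = 0.
Proof.
move=> AJA Au; apply: contraNeq => uu.
have := mink_mulmx u u AJA; rewrite Au minkZl minkZr mulrA -expr2.
by rewrite -[X in _ = X]mul1r => /(mulIf uu) ->.
Qed.

Lemma isometry_covector A f l :
  mink_isometry A -> l != 0 -> A *m f = l *: f ->
  A^T *m (minkJ R *m f) = l^-1 *: (minkJ R *m f).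
Proof.
move=> AJA l0 Af.
have := congr1 (mulmx^~ f) AJA; rewrite -!mulmxA Af -!scalemxAr mulmxA => <-.
by rewrite scalerA mulVf // scale1r.
Qed.

Lemma parabolic_eigenvalue_sqr A f l :
  f != 0 -> parabolic_fixing A f -> A *m f = l *: f -> l ^+ 2 = 1.
Proof.
move=> f0 [[AJA [detA _]] [_ [_ fixed_only_f]]] Af.
have Aunit : A \in unitmx by rewrite unitmxE detA unitr1.
have l0 := unitmx_eigenvalue_neq0 Aunit f0 Af.
have Jf0 : minkJ R *m f != 0.
  by apply: contraNneq f0 => Jf0; rewrite -[f]mul1mx -minkJK -mulmxA Jf0 mulmx0.
have : eigenvalue A^T l^-1.
  rewrite eigenvalue_tr -{1}(trmxK A); apply/col_eigenvalueP.
  by exists (minkJ R *m f) => //; apply: isometry_covector.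
case/col_eigenvalueP => u Au u0.
have [//|l2] := eqVneq (l ^+ 2) 1.
have uu : mink u u <= 0.
  by rewrite (isometry_eigenvector_null AJA Au) // exprVn invr_eq1.
have [c [c0 uf]] := fixed_only_f u u0 uu (ex_intro _ _ Au).
move: Au; rewrite uf -scalemxAr Af !scalerA => /eqP.
rewrite -subr_eq0 -scalerBl scaler_eq0 (negbTE f0) orbF subr_eq0 mulrC.
rewrite (inj_eq (mulIf c0)) => /eqP linvl.
by rewrite expr2 {1}linvl mulVf.
Qed.

Lemma nu_mulmx A f p l :
  mink_isometry A -> A *m f = l *: f -> l ^+ 2 = 1 ->
  nu f (A *m p) = nu f p.
Proof.
move=> AJA Af l2; rewrite /nu mink_mulmx //.
have norml : `|l| = 1 by rewrite -sqrtr_sqr l2 sqrtr1.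
by rewrite -(mink_mulmx f p AJA) Af minkZl normrM norml mul1r.
Qed.

Lemma nu_parabolic_1pgroup g f p t :
  f != 0 -> parabolic_1pgroup g f -> nu f (g t *m p) = nu f p.
Proof.
move=> f0 [g0 [_ [_ gpar]]].
have [->|t0] := eqVneq t 0; first by rewrite g0 mul1mx.
have gtpar := gpar t t0; have [[AJA _] [_ [[l gtf] _]]] := gtpar.
exact: nu_mulmx AJA gtf (parabolic_eigenvalue_sqr f0 gtpar gtf).
Qed.

End Minkowski.

Theorem lemma4 (R : realType) (f r r' : vec R) :
  in_bdK f -> in_K r -> in_K r' -> on_same_horocycle f r r' ->
  nu f r = nu f r'.
Proof.
move=> [f0 _] _ _ [g [p0 [t [t' [g1p [_ [[c [c0 ->]] [c' [c'0 ->]]]]]]]]].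
by rewrite !nuZ // !(nu_parabolic_1pgroup _ _ f0 g1p).
Qed.
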